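(* Let $n\ge2$ and let $\mathbb{F}$ be any field. Then $\mathrm{Der}_{\mathrm{inn}}(\mathbb{F}T_{4n})$ has dimension $3(n-1)$ over $\mathbb{F}$, and an $\mathbb{F}$-basis is $\{d_g\mid g\in\{a^i,\ a^{2i}b,\ a^{2i+1}b\mid 1\le i\le n-1\}\}$.
   Context: $T_{4n}=\langle a,b\mid a^{2n}=1,\ a^n=b^2,\ b^{-1}ab=a^{-1}\rangle$ is the dicyclic group of order $4n$; $\mathbb{F}T_{4n}$ is its group algebra. For $\beta\in\mathbb{F}T_{4n}$, the inner derivation $d_\beta$ is $d_\beta(\alpha)=\alpha\beta-\beta\alpha$; $\mathrm{Der}_{\mathrm{inn}}(\mathbb{F}T_{4n})=\{d_\beta\mid\beta\in\mathbb{F}T_{4n}\}$, an $\mathbb{F}$-vector space. *)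

From HB Require Import structures.
From mathcomp Require Import all_boot all_order all_algebra all_fingroup.
From mathcomp Require Import ring zify.
Set Implicit Arguments. Unset Strict Implicit. Unset Printing Implicit Defensive.
Import GRing.Theory.

(* Concrete model: the pair (i, e) stands for a^i b^e, with i taken mod 2n. *)
Definition dic (n : nat) := ('Z_(2 * n) * bool)%type.
HB.instance Definition _ n := Finite.on (dic n).

Section DicGroup.
Variable n : nat.
Local Open Scope ring_scope.
Let nn : 'Z_(2 * n) := n%:R.

Definition dic_mul (x y : dic n) : dic n :=
  (x.1 + (if x.2 then - y.1 else y.1) + (if x.2 && y.2 then nn else 0),
   x.2 (+) y.2).
Definition dic_one : dic n := (0, false).
Definition dic_inv (x : dic n) : dic n :=
  if x.2 then (x.1 + nn, true) else (- x.1, false).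

Lemma nn_double : nn + nn = 0.
Proof.
rewrite /nn -natrD addnn -mul2n.
case: n => [|m]; first by rewrite muln0.
apply/val_inj => /=; rewrite val_Zp_nat ?modnn //; lia.
Qed.

Lemma nn_opp : - nn = nn.
Proof. by apply/eqP; rewrite eq_sym -subr_eq0 opprK nn_double. Qed.

Lemma dic_mulA : associative dic_mul.
Proof.
move=> [i e] [j f] [k g]; rewrite /dic_mul /=.
congr pair; last by rewrite addbA.
case: e; case: f; case: g => /=; rewrite ?opprD ?opprK ?nn_opp; ring.
Qed.

Lemma dic_mul1 : left_id dic_one dic_mul.
Proof. by move=> [i e]; rewrite /dic_mul /= add0r addr0. Qed.

Lemma dic_mulV : left_inverse dic_one dic_inv dic_mul.
Proof.
move=> [i e]; rewrite /dic_mul /dic_inv /dic_one /=.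
case: e => /=; congr pair => //.
- by rewrite addrAC -[i + nn + nn]addrA nn_double addr0 subrr.
- by rewrite addNr addr0.
Qed.

End DicGroup.

HB.instance Definition _ n :=
  Finite_isGroup.Build (dic n) (@dic_mulA n) (@dic_mul1 n) (@dic_mulV n).

Definition dic_a (n : nat) : dic n := (1%R, false).
Definition dic_b (n : nat) : dic n := (0%R, true).

(* Sanity checks: the concrete model satisfies the defining presentation
   of T_{4n}, is generated by a and b, and has order 4n. *)
Lemma dic_mulE n (x y : dic n) : (x * y)%g = dic_mul x y. Proof. by []. Qed.
Lemma dic_invE n (x : dic n) : (x^-1)%g = dic_inv x. Proof. by []. Qed.
Lemma dic_oneE n : (1 : dic n)%g = dic_one n. Proof. by []. Qed.
Lemma dic_aX n k : (dic_a n ^+ k)%g = ((k%:R)%R, false).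
Proof.
elim: k => [|k IH]; first by [].
by rewrite expgS IH dic_mulE /dic_mul /= addr0 mulrS.
Qed.
Lemma dic_a_order n : (dic_a n ^+ (2 * n))%g = 1%g.
Proof. by rewrite dic_aX dic_oneE /dic_one; congr pair; rewrite [X in (X%:R)%R]mul2n -addnn natrD nn_double. Qed.
Lemma dic_ab n : (dic_a n ^+ n)%g = (dic_b n ^+ 2)%g.
Proof. by rewrite dic_aX expgS expg1 dic_mulE /dic_mul /= oppr0 !add0r. Qed.
Lemma dic_conj n : ((dic_b n)^-1 * dic_a n * dic_b n)%g = (dic_a n)^-1%g.
Proof.
rewrite !dic_mulE dic_invE /dic_mul /dic_inv /= oppr0 !addr0 add0r.
by rewrite dic_invE /dic_inv /= addrAC nn_double add0r.
Qed.
Lemma card_dic n : (0 < n)%N -> #|[set: dic n]| = (4 * n)%N.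
Proof.
move=> n0; rewrite cardsT card_prod card_ord Zp_cast ?card_bool; lia.
Qed.
Lemma dic_gen n : (0 < n)%N -> <<[set dic_a n; dic_b n]>>%g = [set: dic n].
Proof.
move=> n0; apply/eqP; rewrite eqEsubset subsetT /=; apply/subsetP => -[i e] _.
have -> : (i, e) = (dic_a n ^+ i * (if e then dic_b n else 1))%g.
  rewrite dic_aX dic_mulE; case: e; rewrite /dic_mul /= ?oppr0 ?addr0 ?natr_Zp //.
apply: groupM; first by apply: groupX; apply: mem_gen; rewrite !inE eqxx.
by case: e => //; apply: mem_gen; rewrite !inE eqxx orbT.
Qed.

Section GroupAlgebra.
Variables (F : fieldType) (G : finGroupType).
Local Open Scope ring_scope.

(* Elements of F G are the formal sums \sum_g x(g) g, i.e. functions G -> F. *)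
Definition galg := {ffun G -> F^o}.

Definition gmul (x y : galg) : galg :=
  [ffun g => \sum_(h : G) x h * y (h^-1 * g)%g].

Definition gdelta (g : G) : galg := [ffun h => (h == g)%:R].

Definition inner_der_fun (beta : galg) (alpha : galg) : galg :=
  gmul alpha beta - gmul beta alpha.
Definition inner_der (beta : galg) : 'End(galg) := linfun (inner_der_fun beta).

Definition Der_inn : {vspace 'End(galg)} :=
  limg (linfun inner_der : 'Hom(galg, 'End(galg))).

End GroupAlgebra.

Section GroupAlgebraFacts.
Local Open Scope ring_scope.

Variables (F : fieldType) (G : finGroupType).
Lemma gmul_linl (z : galg F G) a x y : gmul (a *: x + y) z = a *: gmul x z + gmul y z.
Proof.
apply/ffunP=> g; rewrite !ffunE scaler_sumr -big_split /=; apply: eq_bigr => h _.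
by rewrite !ffunE /= mulrDl -scalerAl.
Qed.
Lemma gmul_linr (z : galg F G) a x y : gmul z (a *: x + y) = a *: gmul z x + gmul z y.
Proof.
apply/ffunP=> g; rewrite !ffunE scaler_sumr -big_split /=; apply: eq_bigr => h _.
by rewrite !ffunE /= mulrDr -scalerAr.
Qed.
Lemma inner_der_fun_linear (beta : galg F G) : linear (inner_der_fun beta).
Proof.
move=> a x y; rewrite /inner_der_fun gmul_linl gmul_linr scalerBr.
by rewrite opprD !addrA; congr (_ + _); rewrite -!addrA; congr (_ + _); rewrite addrC.
Qed.
HB.instance Definition _ (beta : galg F G) := GRing.isLinear.Build F _ _ _ (inner_der_fun beta) (inner_der_fun_linear beta).
Lemma inner_derE (beta alpha : galg F G) : inner_der beta alpha = gmul alpha beta - gmul beta alpha.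
Proof. by rewrite /inner_der lfunE. Qed.
Lemma inner_der_linear : linear (@inner_der F G).
Proof.
move=> a x y; apply/lfunP => alpha.
rewrite !add_lfunE !scale_lfunE !inner_derE /= gmul_linl gmul_linr scalerBr.
by rewrite opprD !addrA; congr (_ + _); rewrite -!addrA; congr (_ + _); rewrite addrC.
Qed.
HB.instance Definition _ := GRing.isLinear.Build F _ _ _ (@inner_der F G) inner_der_linear.
Lemma Der_innP d : d \in Der_inn F G <-> exists beta, d = inner_der beta.
Proof.
split.
  by case/memv_imgP => beta _ ->; exists beta; rewrite lfunE.
by case=> beta ->; rewrite -[inner_der beta](lfunE (inner_der (G := G))) memv_img ?memvf.
Qed.
End GroupAlgebraFacts.

From HB Require Import structures.
From mathcomp Require Import all_boot all_order all_algebra all_fingroup.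
From mathcomp Require Import ring zify.
Set Implicit Arguments. Unset Strict Implicit. Unset Printing Implicit Defensive.
Import GRing.Theory.

(* d_beta = 0 exactly when beta is constant on conjugacy classes, so the kernel
   of beta |-> d_beta is spanned by the class sums.  Hence if a list s of group
   elements omits exactly one element of every conjugacy class, the d_g with
   g in s form a basis of Der_inn: modulo the class sums, the omitted element
   of a class is minus the sum of the others, and a nonzero combination of the
   g in s is never a class function, as it vanishes on the omitted elements.
   In T_4n the list of the theorem omits 1, a^n, a^(n+1), ..., a^(2n-1), b and
   ab, one from each of the n + 3 classes {1}, {a^n}, {a^i, a^-i}, {a^2i b}
   and {a^(2i+1) b}. *)

Section InnerDerivations.
Local Open Scope ring_scope.
Variables (F : fieldType) (G : finGroupType).
Local Notation FG := (galg F G).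
Local Notation delta := (@gdelta F G).

Lemma gmul_gdeltal x (beta : FG) g : gmul (delta x) beta g = beta (x^-1 * g)%g.
Proof.
rewrite ffunE (bigD1 x) //= ffunE eqxx mul1r big1 ?addr0 // => h hx.
by rewrite ffunE (negbTE hx) mul0r.
Qed.

Lemma gmul_gdeltar (beta : FG) x g : gmul beta (delta x) g = beta (g * x^-1)%g.
Proof.
rewrite ffunE (bigD1 (g * x^-1)%g) //= ffunE invMg invgK mulgKV eqxx mulr1.
rewrite big1 ?addr0 // => h hx; rewrite ffunE.
case: eqP => [E|_]; last by rewrite mulr0.
by case/eqP: hx; rewrite -E invMg invgK mulKVg.
Qed.

Definition class_fun (beta : FG) := forall x y : G, beta (y ^ x)%g = beta y.

Lemma inner_der_eq0 (beta : FG) : inner_der beta = 0 <-> class_fun beta.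
Proof.
split=> [d0 x y | cf_beta].
  have /eqP := congr1 (fun d : 'End(FG) => d (delta x) (y * x)%g) d0.
  rewrite inner_derE zero_lfunE ffunE gmul_gdeltal ffunE gmul_gdeltar ffunE.
  by rewrite mulgK subr_eq0 => /eqP.
apply/lfunP => alpha; rewrite inner_derE zero_lfunE; apply/ffunP => g.
rewrite !ffunE; apply/eqP; rewrite subr_eq0; apply/eqP.
rewrite [RHS](reindex_inj (inj_comp (mulgI g) (@invg_inj G))) /=.
apply: eq_bigr => k _; rewrite invMg invgK mulgKV mulrC; congr (_ * _).
by rewrite -(cf_beta k (g * k^-1)%g) /conjg mulgKV.
Qed.

Lemma span_gdelta_supp (s : seq G) v g :
  v \in <<map delta s>>%VS -> g \notin s -> v g = 0.
Proof.
elim: s v => [|h s IH] v /=.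
  by rewrite span_nil memv0 => /eqP -> _; rewrite ffunE.
rewrite span_cons => /memv_addP [_ /vlineP [k ->] [w ws ->]].
rewrite inE negb_or => /andP [gh gs].
by rewrite !ffunE (IH _ ws gs) (negbTE gh) scaler0 addr0.
Qed.

Lemma free_gdelta (s : seq G) : uniq s -> free (map delta s).
Proof.
elim: s => [|h s IH] /=; first by rewrite nil_free.
case/andP=> hs us; rewrite free_cons IH // andbT.
apply/negP => /span_gdelta_supp /(_ hs); rewrite ffunE eqxx => /eqP.
by rewrite oner_eq0.
Qed.

Lemma span_gdelta_enum : <<map delta (enum G)>>%VS = fullv.
Proof.
apply/eqP; rewrite eqEsubv subvf /=; apply/subvP => v _.
have -> : v = \sum_(g : G) v g *: delta g.
  apply/ffunP => h; rewrite sum_ffunE (bigD1 h) //= !ffunE eqxx.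
  rewrite big1 ?addr0 => [|c ch]; first exact: esym (mulr1 _).
  by rewrite !ffunE eq_sym (negbTE ch) scaler0.
apply: rpred_sum => g _; apply/memvZ/memv_span/map_f.
by rewrite mem_enum.
Qed.

Definition class_ind (g : G) : FG := [ffun h => (h \in (g ^: [set: G])%g)%:R].

Lemma class_ind_class_fun g : class_fun (class_ind g).
Proof.
move=> x y; rewrite !ffunE memJ_norm //.
exact: subsetP (class_norm g [set: G]) x (in_setT x).
Qed.

Lemma class_indE g : class_ind g = \sum_(c in (g ^: [set: G])%g) delta c.
Proof.
apply/ffunP => h; rewrite !ffunE sum_ffunE.
case: (boolP (h \in _)) => hC.
  rewrite (bigD1 h) //= ffunE eqxx big1 ?addr0 // => c /andP [_ ch].
  by rewrite ffunE eq_sym (negbTE ch).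
by rewrite big1 // => c cC; rewrite ffunE; case: eqP => // E; rewrite E cC in hC.
Qed.

Section Basis.
Variable s : seq G.
Hypothesis s_uniq : uniq s.
Hypothesis conj_notin_mem : forall g h, g \notin s -> h \in (g ^: [set: G])%g -> h != g -> h \in s.
Hypothesis mem_conj_notin : forall g, g \in s -> exists x : G, (g ^ x)%g \notin s.

Let D : 'Hom(FG, 'End(FG)) := linfun (@inner_der F G).

Lemma span_gdelta_cap_ker : (<<map delta s>> :&: lker D = 0)%VS.
Proof.
apply/eqP; rewrite -subv0; apply/subvP => v /memv_capP [vs].
rewrite memv_ker lfunE /= => /eqP /inner_der_eq0 cf_v; rewrite memv0.
apply/eqP/ffunP => g; rewrite ffunE.
case: (boolP (g \in s)) => gs; last exact: span_gdelta_supp vs gs.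
by have [x xs] := mem_conj_notin gs; rewrite -(cf_v x) (span_gdelta_supp vs xs).
Qed.

Lemma Der_inn_span_gdelta : (D @: <<map delta s>>)%VS = Der_inn F G.
Proof.
apply/eqP; rewrite eqEsubv limgS ?subvf // /Der_inn -/D -span_gdelta_enum.
rewrite !limg_span; apply/span_subvP => _ /mapP [_ /mapP [g _ ->] ->].
case: (boolP (g \in s)) => gs; first by rewrite memv_span // map_f // map_f.
have -> : delta g = class_ind g - \sum_(c in (g ^: [set: G])%g | c != g) delta c.
  by rewrite class_indE (bigD1 g) ?class_refl //= addrK.
rewrite linearB /= {1}/D lfunE /= (proj2 (inner_der_eq0 _) (class_ind_class_fun g)).
rewrite sub0r rpredN linear_sum rpred_sum // => c /andP [cg c_g].
by rewrite memv_span // map_f // map_f // (conj_notin_mem gs cg c_g).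
Qed.

Lemma Der_inn_basis : basis_of (Der_inn F G) [seq inner_der (delta g) | g <- s].
Proof.
rewrite -Der_inn_span_gdelta.
have -> : [seq inner_der (delta g) | g <- s] = map D (map delta s).
  by rewrite -map_comp; apply: eq_map => g; rewrite /= lfunE.
apply: limg_basis_of span_gdelta_cap_ker _.
by rewrite /basis_of eqxx free_gdelta.
Qed.

End Basis.
End InnerDerivations.

Lemma ltn2_odd_eq (r v : nat) : (v < 2)%N -> odd r = odd v -> r != v -> (1 < r)%N.
Proof. by case: r => [|[|r]] //; case: v => [|[|v]]. Qed.

Section Dicyclic.
Local Open Scope ring_scope.
Variable n : nat.
Hypothesis n_ge2 : (2 <= n)%N.
Local Notation Zn := 'Z_(2 * n).

Lemma dic_conjgE (x y : dic n) : (y ^ x)%g =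
  (if y.2 then (if x.2 then x.1 + x.1 - y.1 else y.1 - x.1 - x.1)
   else (if x.2 then - y.1 else y.1), y.2).
Proof.
case: x y => [k []] [j []]; rewrite /conjg !dic_mulE dic_invE /dic_mul /dic_inv /=;
  congr pair; ring || by rewrite addr0 -[RHS]addr0 -(nn_double n); ring.
Qed.

Lemma dic_aXb k : (dic_a n ^+ k * dic_b n)%g = (k%:R, true).
Proof. by rewrite dic_aX dic_mulE /dic_mul /= !addr0. Qed.

Let Zp_cast2 : (Zp_trunc (2 * n)).+2 = (2 * n)%N.
Proof. by apply: Zp_cast; lia. Qed.

Let odd_modulus : odd (2 * n) = false.
Proof. by rewrite mul2n odd_double. Qed.

Lemma ltn_Zp (x : Zn) : (x < 2 * n)%N.
Proof. by rewrite -[X in (_ < X)%N]Zp_cast2 ltn_ord. Qed.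

Lemma val_Zp_natr v : (v%:R : Zn) = (v %% (2 * n))%N :> nat.
Proof. by apply: val_Zp_nat; lia. Qed.

Lemma natr_val_Zp (x : Zn) : (x : nat)%:R = x.
Proof. exact: natr_Zp. Qed.

Lemma natr_Zp_modulus : ((2 * n)%:R : Zn) = 0.
Proof. by apply: val_inj => /=; rewrite val_Zp_natr modnn. Qed.

Lemma oppr_Zp (x : Zn) : - x = (2 * n - x)%:R.
Proof.
apply/eqP; rewrite eq_sym -subr_eq0 opprK -{2}(natr_val_Zp x) -natrD subnK.
  by rewrite natr_Zp_modulus.
exact/ltnW/ltn_Zp.
Qed.

Lemma val_ZpN (x : Zn) : x != 0 -> (- x : Zn) = (2 * n - x)%N :> nat.
Proof.
move=> x0; rewrite oppr_Zp val_Zp_natr modn_small //.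
have : (x : nat) != 0%N by apply: contra x0 => /eqP x0; apply/eqP/val_inj.
have := ltn_Zp x; lia.
Qed.

Lemma val_ZpD (x y : Zn) : (x + y : Zn) = ((x + y) %% (2 * n))%N :> nat.
Proof. by rewrite -val_Zp_natr natrD !natr_val_Zp. Qed.

Lemma odd_ZpD (x y : Zn) : odd (x + y)%R = odd x (+) odd y.
Proof. by rewrite val_ZpD odd_mod // oddD. Qed.

Lemma odd_ZpN (x : Zn) : odd (- x)%R = odd x.
Proof.
rewrite oppr_Zp val_Zp_natr odd_mod // oddB ?odd_modulus //.
exact/ltnW/ltn_Zp.
Qed.

Lemma Zp_natrP (x : Zn) : exists2 v, (v < 2 * n)%N & x = v%:R.
Proof. by exists x; rewrite ?ltn_Zp ?natr_val_Zp. Qed.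

Lemma natr_Zp_inj v w : (v < 2 * n)%N -> (w < 2 * n)%N -> (v%:R : Zn) = w%:R -> v = w.
Proof. by move=> v_lt w_lt /(congr1 val) /=; rewrite !val_Zp_natr !modn_small. Qed.

Definition dic_basis_elems : seq (dic n) :=
  ([seq dic_a n ^+ i | i <- iota 1 n.-1]
   ++ [seq dic_a n ^+ (2 * i) * dic_b n | i <- iota 1 n.-1]
   ++ [seq dic_a n ^+ (2 * i).+1 * dic_b n | i <- iota 1 n.-1])%g.

Lemma dic_basis_elemsE : dic_basis_elems =
  [seq (i%:R, false) | i <- iota 1 n.-1]
  ++ [seq ((2 * i)%:R, true) | i <- iota 1 n.-1]
  ++ [seq ((2 * i).+1%:R, true) | i <- iota 1 n.-1].
Proof.
by congr (_ ++ (_ ++ _)); apply: eq_map => i; rewrite ?dic_aXb ?dic_aX.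
Qed.

Lemma mem_dic_basis_elems (g : dic n) : (g \in dic_basis_elems) =
  if g.2 then (1 < g.1)%N else (0 < g.1 < n)%N.
Proof.
case: g => x f /=; have [v v_lt ->] := Zp_natrP x.
rewrite dic_basis_elemsE !mem_cat val_Zp_natr modn_small //.
apply/idP/idP.
  case/or3P => /mapP [i]; rewrite mem_iota => i_range [/natr_Zp_inj v_eq ->];
    rewrite v_eq //; lia.
case: f => v_range; last by apply/orP; left; apply/mapP; exists v; rewrite ?mem_iota //; lia.
have v_eq := odd_double_half v.
apply/orP; right; apply/orP.
case: (odd v) v_eq => /= v_eq; [right | left]; apply/mapP; exists v./2;
  rewrite ?mem_iota; do ?congr (_%:R, _); lia.
Qed.

Lemma size_dic_basis_elems : size dic_basis_elems = (3 * (n - 1))%N.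
Proof. by rewrite /dic_basis_elems !size_cat !size_map size_iota; lia. Qed.

Lemma uniq_natr_iota (k : nat -> nat) e :
    {in iota 1 n.-1 &, injective k} -> {in iota 1 n.-1, forall i, k i < 2 * n}%N ->
  uniq [seq ((k i)%:R, e) : dic n | i <- iota 1 n.-1].
Proof.
move=> k_inj k_lt; rewrite map_inj_in_uniq ?iota_uniq // => i j i_in j_in.
by case=> /natr_Zp_inj eq_k; apply: k_inj; rewrite // eq_k ?k_lt.
Qed.

Lemma dic_basis_elems_uniq : uniq dic_basis_elems.
Proof.
rewrite dic_basis_elemsE !cat_uniq !uniq_natr_iota ?andbT /=;
  try by move=> i; rewrite ?mem_iota; lia.
apply/andP; split.
  by apply/hasPn => x; rewrite mem_cat => /orP [] /mapP [i _ ->]; apply/mapP => -[].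
apply/hasPn => y /mapP [i]; rewrite mem_iota => i_range ->.
apply/mapP => -[j]; rewrite mem_iota => j_range [/natr_Zp_inj]; lia.
Qed.

Lemma dic_basis_elems_conj_out (g h : dic n) : g \notin dic_basis_elems ->
  h \in (g ^: [set: dic n])%g -> h != g -> h \in dic_basis_elems.
Proof.
move=> + /imsetP [x _ ->]; rewrite dic_conjgE !mem_dic_basis_elems.
case: g => j [] /= j_out x_moves.
  set c := (if x.2 then _ else _) in x_moves *.
  have odd_c : odd c = odd j.
    by rewrite /c; case: x.2; rewrite !odd_ZpD ?odd_ZpN; do 2 case: odd.
  have c_neq : (c : nat) != j by apply: contra x_moves => /eqP/val_inj ->.
  by apply: ltn2_odd_eq odd_c c_neq; rewrite ltnNge.
case: x.2 x_moves => x_moves; last by rewrite eqxx in x_moves.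
have j_neq0 : j != 0 by apply: contra x_moves => /eqP ->; rewrite oppr0.
have j_opp : (- j : Zn) != j :> nat by apply: contra x_moves => /eqP/val_inj ->.
move: j_opp j_out; rewrite val_ZpN //; have := ltn_Zp j.
have : (j : nat) != 0%N by apply: contra j_neq0 => /eqP j0; apply/eqP/val_inj.
lia.
Qed.

Lemma dic_basis_elems_conj_in (g : dic n) : g \in dic_basis_elems ->
  exists x : dic n, (g ^ x)%g \notin dic_basis_elems.
Proof.
rewrite mem_dic_basis_elems; case: g => j [] /= j_in.
  have j_odd : j - j./2%:R - j./2%:R = (odd j)%:R.
    have j_split : j = (odd j)%:R + j./2%:R + j./2%:R.
      by rewrite -!natrD -addnA addnn odd_double_half natr_val_Zp.
    by rewrite {1}j_split !addrK.
  exists (j./2%:R, false); rewrite dic_conjgE /= j_odd mem_dic_basis_elems /=.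
  by rewrite val_Zp_natr modn_small; case: odd => //; lia.
have j_neq0 : j != 0 by apply: contraTneq j_in => ->.
exists (0, true); rewrite dic_conjgE /= mem_dic_basis_elems val_ZpN //=; lia.
Qed.

End Dicyclic.

Theorem theorem4p5 (n : nat) (F : fieldType) :
  (2 <= n)%N ->
  let a := dic_a n in
  let b := dic_b n in
  let S : seq (dic n) :=
    ([seq a ^+ i | i <- iota 1 n.-1]
     ++ [seq a ^+ (2 * i) * b | i <- iota 1 n.-1]
     ++ [seq a ^+ (2 * i).+1 * b | i <- iota 1 n.-1])%g in
  \dim (Der_inn F (dic n)) = (3 * (n - 1))%N /\
  basis_of (Der_inn F (dic n)) [seq inner_der (gdelta F g) | g <- S].
Proof.
move=> n_ge2 a b S.
have S_basis : basis_of (Der_inn F (dic n)) [seq inner_der (gdelta F g) | g <- S].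
  apply: Der_inn_basis.
  - exact: dic_basis_elems_uniq.
  - exact: dic_basis_elems_conj_out.
  - exact: dic_basis_elems_conj_in.
split=> //; case/andP: S_basis => /eqP <- /eqnP ->.
by rewrite size_map size_dic_basis_elems.
Qed.
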